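(* For $n\ge 2$, $$(\mathfrak C_0+\mathfrak C_0+\mathfrak C_0+\mathfrak C_0+\mathfrak C_0)^n=\binom{2n-1}{4}\mathfrak C_{2n}+\frac{4n^2-16n+17}{3}\binom{2n}{2}\binom{2n-3}{2}\mathfrak C_{2n-2}+\binom{2n}{4}(2n-5)^4\mathfrak C_{2n-4}.$$
   Context: The numbers $\mathfrak C_{2n}$ (Cauchy numbers with level $2$) are defined by $\frac{t}{{\rm arcsinh}\,t}=\sum_{n=0}^\infty\mathfrak C_{2n}\frac{t^{2n}}{(2n)!}$. Convolution notation: $(\mathfrak C_{2j_1}+\cdots+\mathfrak C_{2j_k})^n:=\sum_{i_1+\cdots+i_k=n,\ i_1,\dots,i_k\ge0}\frac{(2n)!}{(2i_1)!\cdots(2i_k)!}\mathfrak C_{2i_1+2j_1}\cdots\mathfrak C_{2i_k+2j_k}$ (here with $k=5$ summands, all $j_i=0$). *)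

From mathcomp Require Import all_boot all_order all_algebra.
Set Implicit Arguments. Unset Strict Implicit. Unset Printing Implicit Defensive.
Import Order.TTheory GRing.Theory Num.Theory.
Local Open Scope ring_scope.

(* arcsinh t = \sum_k asinh_coef k * t^(2k+1), with
   asinh_coef k = (-1)^k (2k)! / (4^k (k!)^2 (2k+1)). *)
Definition asinh_coef (k : nat) : rat :=
  (-1) ^+ k * ((2 * k)`!)%:R / ((4 ^ k * (k`!) ^ 2 * (2 * k).+1)%N)%:R.

(* t / arcsinh t = 1 / (\sum_k asinh_coef k t^(2k)) = \sum_n b_n t^(2n)
   as formal power series in t^2 (asinh_coef 0 = 1), i.e.
   b_0 = 1 and \sum_(j=0)^n asinh_coef j * b_(n-j) = 0 for n >= 1.
   bseq n = [:: b_0; ...; b_n]. *)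
Fixpoint bseq (n : nat) : seq rat :=
  match n with
  | 0 => [:: 1]
  | n'.+1 =>
      let s := bseq n' in
      rcons s (- \sum_(j < n) asinh_coef j.+1 * nth 0 s (n' - j)%N)
  end.

(* Cauchy numbers with level 2: cauchy2 m = \mathfrak C_{2m}, so that
   t / arcsinh t = \sum_m cauchy2 m * t^(2m) / (2m)!. *)
Definition cauchy2 (m : nat) : rat := ((2 * m)`!)%:R * nth 0 (bseq m) m.

(* Convolution (C_{2 j_1} + ... + C_{2 j_k})^n :=
   \sum_{i_1+...+i_k = n} (2n)!/((2i_1)!...(2i_k)!) C_{2i_1+2j_1} ... C_{2i_k+2j_k}. *)
Definition cauchy2_conv (k : nat) (js : 'I_k -> nat) (n : nat) : rat :=
  \sum_(i : {ffun 'I_k -> 'I_n.+1} | (\sum_(l < k) (i l : nat))%N == n)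
     ((2 * n)`!)%:R / (\prod_(l < k) ((2 * i l)`!)%:R)
     * \prod_(l < k) cauchy2 (i l + js l)%N.

Example cauchy2_0 : cauchy2 0 = 1. Proof. by rewrite /cauchy2 /= mul1r. Qed.

From Pilot Require Import Defs.
From mathcomp Require Import all_boot all_order all_algebra.
Import Order.TTheory GRing.Theory Num.Theory.
Local Open Scope ring_scope.
From mathcomp Require Import ring lra zify.

(* With x = t^2 write arcsinh t = t A(x) and t / arcsinh t = B(x) = 1 / A(x);
   then a convolution (C_0 + ... + C_0)^n with k terms is (2n)! times the
   coefficient of x^n in B^k.  Since d/dt arcsinh t = (1 + x)^(-1/2) =: Y, the
   Euler operator θ = x d/dx gives 2θA + A = Y, (1 + x) Y^2 = 1 and the Riccati
   equation 2θB - B + Y B^2 = 0.  Eliminating Y yields linear differential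
   equations expressing B^3 through B and B^5 through B^3, i.e. two-term
   recurrences for their coefficients, and composing them gives the formula.
   Power series are handled through their truncations below degree N, the
   identities holding modulo x^N. *)

Set Implicit Arguments.
Unset Strict Implicit.

Section EulerOperator.
Variable R : comNzRingType.
Implicit Types p q : {poly R}.

Definition euler_op p := 'X * p^`().

Lemma euler_opD p q : euler_op (p + q) = euler_op p + euler_op q.
Proof. by rewrite /euler_op derivD mulrDr. Qed.

Lemma euler_opN p : euler_op (- p) = - euler_op p.
Proof. by rewrite /euler_op derivN mulrN. Qed.

Lemma euler_opB p q : euler_op (p - q) = euler_op p - euler_op q.
Proof. by rewrite euler_opD euler_opN. Qed.

Lemma coef_euler_op p i : (euler_op p)`_i = p`_i *+ i.
Proof. by rewrite coefXM; case: i => [|i] //=; rewrite coef_deriv. Qed.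

Lemma euler_opM p q : euler_op (p * q) = euler_op p * q + p * euler_op q.
Proof. by rewrite /euler_op derivM mulrDr mulrA mulrCA. Qed.

Lemma euler_opC c : euler_op c%:P = 0.
Proof. by rewrite /euler_op derivC mulr0. Qed.

Lemma euler_op1 : euler_op 1 = 0.
Proof. exact: euler_opC. Qed.

Lemma euler_op_natr n : euler_op n%:R = 0.
Proof. by rewrite -polyC_natr euler_opC. Qed.

Lemma euler_opX : euler_op 'X = 'X.
Proof. by rewrite /euler_op derivX mulr1. Qed.

Lemma euler_opXn p n : euler_op (p ^+ n.+1) = (p ^+ n * euler_op p) *+ n.+1.
Proof.
elim: n => [|n IHn]; first by rewrite expr1 expr0 mul1r.
rewrite exprS euler_opM IHn -mulrnAr mulrA -exprS [euler_op p * _]mulrC.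
by rewrite [in RHS]mulrSr addrC mulrnAr.
Qed.

End EulerOperator.

Ltac euler_expand :=
  rewrite ?(euler_opB, euler_opD, euler_opN, euler_opM, euler_opXn, euler_op1, euler_op_natr, euler_opX).

Section TruncatedSeries.
Variable R : idomainType.
Implicit Types p : {poly R}.

Lemma dvdXnP N p : reflect (forall i, (i < N)%N -> p`_i = 0) ('X^N %| p).
Proof.
rewrite /dvdp -Pdiv.IdomainMonic.take_poly_modp.
apply: (iffP eqP) => [p0 i ltiN | p0]; last first.
  by apply/polyP => i; rewrite coef_take_poly coef0; case: ifP => // /p0.
by have := congr1 (fun q : {poly R} => q`_i) p0; rewrite coef_take_poly ltiN coef0.
Qed.

Lemma dvdXn_euler_op N p : 'X^N %| p -> 'X^N %| euler_op p.
Proof. by move=> /dvdXnP p0; apply/dvdXnP => i ltiN; rewrite coef_euler_op p0 ?mul0rn. Qed.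

Lemma coefS_mul1DX_addXM (P Q : {poly R}) i :
  ((1 + 'X) * P + 'X * Q)`_i.+1 = P`_i.+1 + P`_i + Q`_i.
Proof. by rewrite mulrDl mul1r !coefD !coefXM. Qed.

End TruncatedSeries.

Ltac dvdp_combination :=
  do ![assumption | apply: dvdp_sub | apply: dvdp_add | apply: dvdp_mull].

Lemma dvdXn_euler_opE (R : numDomainType) N (p : {poly R}) :
  p`_0 = 0 -> ('X^N %| euler_op p) = ('X^N %| p).
Proof.
move=> p00; apply/dvdXnP/dvdXnP => p0 i ltiN; last by rewrite coef_euler_op p0 ?mul0rn.
case: i ltiN => // i ltiN.
by apply/eqP; have := p0 i.+1 ltiN; rewrite coef_euler_op => /eqP; rewrite mulrn_eq0.
Qed.

Definition cauchy2_coef (m : nat) : rat := nth 0 (Defs.bseq m) m.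

Lemma size_cauchy2_bseq m : size (Defs.bseq m) = m.+1.
Proof. by elim: m => //= m IHm; rewrite size_rcons IHm. Qed.

Lemma nth_cauchy2_bseq m j : (j <= m)%N -> nth 0 (Defs.bseq m) j = cauchy2_coef j.
Proof.
elim: m => [|m IHm]; first by rewrite leqn0 => /eqP ->.
rewrite leq_eqVlt => /predU1P[-> // | ltjm].
by rewrite /= nth_rcons size_cauchy2_bseq ltjm IHm.
Qed.

Lemma cauchy2_coefS m :
  cauchy2_coef m.+1 = - \sum_(j < m.+1) asinh_coef j.+1 * cauchy2_coef (m - j).
Proof.
rewrite {1}/cauchy2_coef /= nth_rcons size_cauchy2_bseq ltnn eqxx.
by congr (- _); apply: eq_bigr => j _; rewrite nth_cauchy2_bseq ?leq_subr.
Qed.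

Lemma cauchy2E m : cauchy2 m = ((2 * m)`!)%:R * cauchy2_coef m.
Proof. by []. Qed.

Lemma asinh_coef0 : asinh_coef 0 = 1.
Proof. by rewrite /asinh_coef expr0 mul1r muln0. Qed.

Definition asinh_poly N := \poly_(i < N) asinh_coef i.
Definition cauchy2_poly N := \poly_(i < N) cauchy2_coef i.

Lemma dvdXn_asinh_mul_cauchy2 N : 'X^N %| asinh_poly N * cauchy2_poly N - 1.
Proof.
apply/dvdXnP => -[|m] ltmN; rewrite coefB coefM coef1.
  by rewrite big_ord1 !coef_poly ltmN asinh_coef0 mul1r subrr.
rewrite big_ord_recl subr0 !coef_poly ltmN (ltn_trans _ ltmN) // asinh_coef0 mul1r.
rewrite cauchy2_coefS addrC -sumrN -big_split big1 // => j _ /=.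
by rewrite !coef_poly (leq_ltn_trans (ltn_ord j)) ?(leq_ltn_trans (leq_subr _ _)) ?subrr // ltnW.
Qed.

(* Coefficients of (1 + x)^(-1/2), the derivative of arcsinh t at x = t^2. *)
Definition dasinh_coef (i : nat) : rat := ((2 * i).+1)%:R * asinh_coef i.

Lemma dasinh_coefS j :
  (2 * j.+1)%:R * dasinh_coef j.+1 = - ((2 * j).+1)%:R * dasinh_coef j.
Proof.
have fact_neq0 i : (i`!)%:R != 0 :> rat by rewrite pnatr_eq0 -lt0n fact_gt0.
have dasinh_coefE i :
    dasinh_coef i = (-1) ^+ i * ((2 * i)`!)%:R / ((4 ^ i)%:R * (i`!)%:R ^+ 2).
  rewrite /dasinh_coef /asinh_coef !natrM natrX; field.
  rewrite fact_neq0 expf_neq0 ?pnatr_eq0 -?lt0n ?expn_gt0 //=.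
  by apply: lt0r_neq0; have := ler0n rat i; lra.
rewrite !dasinh_coefE mulnS !factS expnS exprS !natrM natrX.
field; rewrite fact_neq0 -natrX pnatr_eq0 -lt0n expn_gt0 /=.
by rewrite nat1r pnatr_eq0.
Qed.

Section TruncatedODEs.
Variable N : nat.
Local Notation A := (asinh_poly N).
Local Notation B := (cauchy2_poly N).

Definition dasinh_poly := 2 * euler_op A + A.
Local Notation Y := dasinh_poly.

Lemma coef_dasinh_poly i : (i < N)%N -> Y`_i = dasinh_coef i.
Proof.
move=> ltiN; rewrite coefD mulr_natl coefMn coef_euler_op coef_poly ltiN.
by rewrite /dasinh_coef -mulrnA -mulrSr mulr_natl mulnC.
Qed.

Lemma dvdXn_dasinh_ode : 'X^N %| (1 + 'X) * (2 * euler_op Y) + 'X * Y.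
Proof.
apply/dvdXnP => -[|m] ltmN.
  by rewrite mulrDl mul1r !coefD !coefXM /= mulr_natl coefMn coef_euler_op !mul0rn !addr0.
rewrite coefS_mul1DX_addXM !mulr_natl !coefMn !coef_euler_op !coef_dasinh_poly ?(ltnW ltmN) //.
rewrite -!mulrnA -addrA -mulrSr -!(mulr_natl (dasinh_coef _)) mulnC [(m * 2)%N]mulnC.
by rewrite dasinh_coefS mulNr addNr.
Qed.

Lemma dvdXn_dasinh_sqr : 'X^N %| (1 + 'X) * Y ^+ 2 - 1.
Proof.
have [->|N_gt0] := posnP N; first by rewrite expr0 dvd1p.
rewrite -dvdXn_euler_opE; last first.
  rewrite coefB coef1 expr2 !coef0M coefD coef1 coefX addr0 mul1r.
  by rewrite coef_dasinh_poly // /dasinh_coef asinh_coef0 !mulr1 subrr.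
have -> : euler_op ((1 + 'X) * Y ^+ 2 - 1) = Y * ((1 + 'X) * (2 * euler_op Y) + 'X * Y).
  by euler_expand; ring.
exact/dvdp_mull/dvdXn_dasinh_ode.
Qed.

Local Notation D := (2 * euler_op B - B + Y * B ^+ 2).

(* From B = 1/A: 2θB = -2 B^2 θA = B - Y B^2. *)
Lemma dvdXn_cauchy2_ode : 'X^N %| D.
Proof.
have AB1 := dvdXn_asinh_mul_cauchy2 N; have dAB1 := dvdXn_euler_op AB1.
have -> : D = 2 * B * euler_op (A * B - 1) + (B - 2 * euler_op B) * (A * B - 1).
  by rewrite /dasinh_poly; euler_expand; ring.
by dvdp_combination.
Qed.

Lemma dvdXn_cauchy2_cube_ode :
  'X^N %| 2 * B ^+ 3 - ((1 + 'X) * (4 * euler_op (euler_op B) - 6 * euler_op B + 2 * B)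
                        + 'X * (2 * euler_op B - B)).
Proof.
have D0 := dvdXn_cauchy2_ode; have dD0 := dvdXn_euler_op D0.
have Y0 := dvdXn_dasinh_ode; have Y20 := dvdXn_dasinh_sqr.
rewrite (_ : _ - _ = -2 * (1 + 'X) * euler_op D + (2 * (1 + 'X) * (1 + Y * B) - 'X) * D
   - 2 * B ^+ 3 * ((1 + 'X) * Y ^+ 2 - 1) + B ^+ 2 * ((1 + 'X) * (2 * euler_op Y) + 'X * Y)).
  by dvdp_combination.
by euler_expand; ring.
Qed.

Local Notation W := (2 * euler_op (B ^+ 3) - 3 * B ^+ 3).

Lemma dvdXn_cauchy2_fifth_ode :
  'X^N %| 12 * B ^+ 5 - ((1 + 'X) * (2 * euler_op W - 4 * W) + 'X * W).
Proof.
have D0 := dvdXn_cauchy2_ode; have dD0 := dvdXn_euler_op D0.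
have Y0 := dvdXn_dasinh_ode; have Y20 := dvdXn_dasinh_sqr.
rewrite (_ : _ - _ = - (1 + 'X) * (12 * B * euler_op B * D + 6 * B ^+ 2 * euler_op D
      - 12 * Y * B ^+ 3 * D - 12 * B ^+ 2 * D) - 3 * 'X * B ^+ 2 * D
   + 3 * B ^+ 4 * ((1 + 'X) * (2 * euler_op Y) + 'X * Y)
   - 12 * B ^+ 5 * ((1 + 'X) * Y ^+ 2 - 1)).
  by dvdp_combination.
by euler_expand; ring.
Qed.

End TruncatedODEs.

Lemma coef_cauchy2_poly N i : (i < N)%N -> (cauchy2_poly N)`_i = cauchy2_coef i.
Proof. by move=> ltiN; rewrite coef_poly ltiN. Qed.

Lemma coef_cauchy2_poly_exp3 N k : (k.+1 < N)%N ->
  (cauchy2_poly N ^+ 3)`_k.+1 =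
    ((2 * k%:R + 1) * (2 * k%:R) * cauchy2_coef k.+1 + (2 * k%:R - 1) ^+ 2 * cauchy2_coef k) / 2.
Proof.
move=> ltkN; have /dvdXnP/(_ _ ltkN)/eqP := dvdXn_cauchy2_cube_ode N.
rewrite coefB subr_eq0 coefS_mul1DX_addXM !(mulr_natl, coefB, coefD, coefMn, coef_euler_op).
by rewrite !coef_cauchy2_poly ?(ltnW ltkN) // => /eqP; lra.
Qed.

Lemma coef_cauchy2_poly_exp5 N k : (k.+1 < N)%N ->
  (cauchy2_poly N ^+ 5)`_k.+1 =
    ((2 * k%:R - 2) * (2 * k%:R - 1) * (cauchy2_poly N ^+ 3)`_k.+1
     + (2 * k%:R - 3) ^+ 2 * (cauchy2_poly N ^+ 3)`_k) / 12.
Proof.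
move=> ltkN; have /dvdXnP/(_ _ ltkN)/eqP := dvdXn_cauchy2_fifth_ode N.
rewrite coefB subr_eq0 coefS_mul1DX_addXM !(mulr_natl, coefB, coefD, coefMn, coef_euler_op).
by move=> /eqP; lra.
Qed.

Lemma coef_poly_exp (R : comNzRingType) (c : nat -> R) k n :
  ((\poly_(i < n.+1) c i) ^+ k)`_n =
    \sum_(f : {ffun 'I_k -> 'I_n.+1} | (\sum_(l < k) (f l : nat))%N == n)
       \prod_(l < k) c (f l).
Proof.
have prod_monomials (e : 'I_k -> nat) (a : 'I_k -> R) :
    \prod_l (a l *: 'X^(e l)) = (\prod_l a l) *: 'X^(\sum_l e l).
  under eq_bigr do rewrite -mul_polyC.
  by rewrite big_split /= -rmorph_prod prodrXr mul_polyC.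
rewrite poly_def -{1}[k]card_ord -prodr_const.
rewrite (bigA_distr_bigA (fun _ (j : 'I_n.+1) => c j *: 'X^j)) /=.
under eq_bigr do rewrite prod_monomials.
by rewrite coef_sumMXn.
Qed.

Lemma cauchy2_conv0 k n :
  cauchy2_conv (fun _ : 'I_k => 0%N) n = ((2 * n)`!)%:R * (cauchy2_poly n.+1 ^+ k)`_n.
Proof.
rewrite coef_poly_exp mulr_sumr; apply: eq_bigr => f _.
under [X in _ * X]eq_bigr do rewrite addn0 cauchy2E.
rewrite big_split /= mulrA divfK // prodf_seq_neq0; apply/allP => l _ /=.
by rewrite pnatr_eq0 -lt0n fact_gt0.
Qed.

Lemma natr_ffact (R : pzRingType) m k : (m ^_ k)%:R = \prod_(i < k) (m%:R - i%:R) :> R.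
Proof.
elim: k => [|k IHk]; first by rewrite ffactn0 big_ord0.
rewrite ffactnSr natrM big_ord_recr /= -IHk.
have [lekm | ltmk] := leqP k m; first by rewrite natrB.
by rewrite ffact_small // !mul0r.
Qed.

Lemma natr_bin (R : numFieldType) m k :
  ('C(m, k))%:R = (\prod_(i < k) (m%:R - i%:R)) / (k`!)%:R :> R.
Proof. by rewrite -natr_ffact -bin_ffact natrM mulfK // pnatr_eq0 -lt0n fact_gt0. Qed.

Theorem mainTheorem8 (n : nat) (hn : (2 <= n)%N) :
  cauchy2_conv (fun _ : 'I_5 => 0%N) n =
    ('C(2 * n - 1, 4))%:R * cauchy2 n
  + (4 * n%:R ^+ 2 - 16 * n%:R + 17) / 3
      * ('C(2 * n, 2))%:R * ('C(2 * n - 3, 2))%:R * cauchy2 (n - 1)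
  + ('C(2 * n, 4))%:R * (2 * n%:R - 5) ^+ 4 * cauchy2 (n - 2).
Proof.
case: n hn => [|[|k]] // _.
rewrite cauchy2_conv0 coef_cauchy2_poly_exp5 // !coef_cauchy2_poly_exp3 // !cauchy2E.
have -> : (k.+2 - 1 = k.+1)%N by lia.
have -> : (k.+2 - 2 = k)%N by lia.
have -> : (2 * k.+2 - 1 = (2 * k).+3)%N by lia.
have -> : (2 * k.+2 - 3 = (2 * k).+1)%N by lia.
have -> : (2 * k.+2 = (2 * k).+4)%N by lia.
have -> : (2 * k.+1 = (2 * k).+2)%N by lia.
rewrite [(2 * k).+4`!]factS [(2 * k).+3`!]factS [(2 * k).+2`!]factS [(2 * k).+1`!]factS.
rewrite !natr_bin !big_ord_recr !big_ord0 /= -[4`!]/24%N -[2`!]/2%N.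
by field.
Qed.
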